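(* Let $R$ be a Dedekind domain and $G\in R^{n\times n}$ with $GG^{T}=\ell^2\mathbf{1}$ for some nonzero $\ell\in R$, where $\mathbf{1}$ is the identity matrix. Let $\mathfrak{d}_1,\ldots,\mathfrak{d}_n$ be the Smith ideals of $G$. Then $\mathfrak{d}_i\mathfrak{d}_{n-i+1}=\ell^2R$ for every $i\leq n/2$.
   Context: The $i$th determinantal ideal $\mathfrak{D}_i\subseteq R$ of $G$ is the ideal generated by all $i\times i$ minors. The Smith ideals are defined by $\mathfrak{d}_1=\mathfrak{D}_1$ and, for $i>1$, $\mathfrak{d}_i$ is the unique ideal with $\mathfrak{d}_i\mathfrak{D}_{i-1}=\mathfrak{D}_i$ if $\mathfrak{D}_{i-1}\neq0$, and $\mathfrak{d}_i=0$ otherwise. *)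

From HB Require Import structures.
From mathcomp Require Import all_boot all_order all_algebra.
From mathcomp Require Import fraction.
Set Implicit Arguments. Unset Strict Implicit. Unset Printing Implicit Defensive.
Import Order.TTheory GRing.Theory Num.Theory.
Local Open Scope ring_scope.

Definition is_ideal (R : comPzRingType) (I : R -> Prop) : Prop :=
  [/\ I 0, (forall x y, I x -> I y -> I (x + y)) & (forall r x, I x -> I (r * x))].

Definition eq_ideal (R : comPzRingType) (I J : R -> Prop) : Prop :=
  forall x, I x <-> J x.

Definition gen_ideal (R : comPzRingType) (S : R -> Prop) : R -> Prop :=
  fun x => exists (s : seq (R * R)),
    (forall p, p \in s -> S p.2) /\ x = \sum_(p <- s) p.1 * p.2.

Definition mul_ideal (R : comPzRingType) (I J : R -> Prop) : R -> Prop :=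
  gen_ideal (fun x => exists a b, [/\ I a, J b & x = a * b]).

Definition zero_ideal (R : comPzRingType) : R -> Prop := fun x => x = 0.

Definition principal_ideal (R : comPzRingType) (a : R) : R -> Prop :=
  fun x => exists r, x = r * a.

Definition nonzero_ideal (R : comPzRingType) (I : R -> Prop) : Prop :=
  exists x, I x /\ x <> 0.

Definition prime_ideal (R : comPzRingType) (P : R -> Prop) : Prop :=
  [/\ is_ideal P, ~ P 1 & forall a b, P (a * b) -> P a \/ P b].

Definition maximal_ideal (R : comPzRingType) (M : R -> Prop) : Prop :=
  [/\ is_ideal M, ~ M 1 &
      forall J, is_ideal J -> (forall x, M x -> J x) -> ~ J 1 -> eq_ideal J M].

Definition noetherian (R : comPzRingType) : Prop :=
  forall I : R -> Prop, is_ideal I ->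
    exists s : seq R, eq_ideal I (gen_ideal (fun x => x \in s)).

Definition integrally_closed (R : idomainType) : Prop :=
  forall x : {fraction R},
    (exists p : {poly R}, p \is monic /\ root (map_poly (@FracField.tofrac R) p) x) ->
    exists r : R, x = FracField.tofrac r.

Definition dim_le1 (R : comPzRingType) : Prop :=
  forall P : R -> Prop, prime_ideal P -> nonzero_ideal P -> maximal_ideal P.

Definition dedekind (R : idomainType) : Prop :=
  [/\ noetherian R, integrally_closed R & dim_le1 R].

(* Minors are
   determinants of the submatrices obtained by choosing rows f and columns g
   (non-injective choices give 0, reorderings give +-minors: same ideal). *)
Definition det_ideal (R : comPzRingType) (m n : nat) (G : 'M[R]_(m, n)) (i : nat)
  : R -> Prop :=
  gen_ideal (fun x => exists (f : 'I_i -> 'I_m) (g : 'I_i -> 'I_n),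
                        x = \det (mxsub f g G)).

Definition smith_ideals (R : comPzRingType) (n : nat) (G : 'M[R]_n)
  (d : nat -> R -> Prop) : Prop :=
  eq_ideal (d 1%N) (det_ideal G 1) /\
  forall i : nat, (1 < i <= n)%N ->
    (nonzero_ideal (det_ideal G i.-1) ->
       is_ideal (d i) /\
       eq_ideal (mul_ideal (d i) (det_ideal G i.-1)) (det_ideal G i)) /\
    (~ nonzero_ideal (det_ideal G i.-1) -> eq_ideal (d i) (@zero_ideal R)).

From mathcomp Require Import all_boot all_order all_algebra all_fingroup fraction.
From mathcomp Require Import zify.
Import GRing.Theory.
Local Open Scope ring_scope.

Set Implicit Arguments. Unset Strict Implicit. Unset Printing Implicit Defensive.

(* Write c = l^2 and D_k for the determinantal ideals. From G G^T = c 1 one gets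
   (det G)^2 = c^n and, through a block decomposition of G, the complementary
   minor relation c^(n-k) D_k <= det G * D_(n-k). Together these give
   D_k D_k' = c D_(k-1) D_(k'-1) whenever k + k' = n + 1. With N = D_(i-1) D_(n-i)
   and X = d_i d_(n-i+1), the defining relations d_k D_(k-1) = D_k turn this into
   X N = c N. Finally c cancels in a Noetherian integrally closed domain:
   X N <= c N makes y / c integral over R for every y in X, and c N <= X N gives,
   by the determinant trick, 1 in {a | c a in X}. *)

Definition sub_ideal (R : comPzRingType) (I J : R -> Prop) : Prop :=
  forall x, I x -> J x.

Definition scale_ideal (R : comPzRingType) (c : R) (I : R -> Prop) : R -> Prop :=
  fun y => exists z, I z /\ y = c * z.

Section IdealTheory.
Variable R : comPzRingType.
Implicit Types (I J K S T : R -> Prop) (a b c x y : R).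

Lemma ideal0 I : is_ideal I -> I 0.
Proof. by case. Qed.

Lemma idealD I x y : is_ideal I -> I x -> I y -> I (x + y).
Proof. by case=> _ hD _; apply: hD. Qed.

Lemma idealMl I a x : is_ideal I -> I x -> I (a * x).
Proof. by case=> _ _ hM; apply: hM. Qed.

Lemma idealMr I x a : is_ideal I -> I x -> I (x * a).
Proof. by rewrite mulrC; apply: idealMl. Qed.

Lemma idealN I x : is_ideal I -> I x -> I (- x).
Proof. by move=> hI hx; rewrite -mulN1r; apply: idealMl. Qed.

Lemma ideal_sum I (U : eqType) (r : seq U) (F : U -> R) :
  is_ideal I -> (forall t, t \in r -> I (F t)) -> I (\sum_(t <- r) F t).
Proof.
move=> hI; elim: r => [|a r IH] hF; first by rewrite big_nil; apply: ideal0.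
rewrite big_cons; apply: idealD => //; first by apply: hF; rewrite inE eqxx.
by apply: IH => t ht; apply: hF; rewrite inE ht orbT.
Qed.

Lemma gen_ideal_is_ideal S : is_ideal (gen_ideal S).
Proof.
split.
- by exists [::]; rewrite big_nil.
- move=> x y [s1 [h1 ->]] [s2 [h2 ->]]; exists (s1 ++ s2); split; last by rewrite big_cat.
  by move=> p; rewrite mem_cat => /orP [] ?; [apply: h1 | apply: h2].
- move=> a x [s [h ->]]; exists [seq (a * p.1, p.2) | p <- s]; split.
    by move=> p /mapP [q qs ->] /=; apply: h.
  by rewrite big_map mulr_sumr; apply: eq_bigr => p _; rewrite mulrA.
Qed.

Lemma gen_ideal_gen S x : S x -> gen_ideal S x.
Proof.
move=> hx; exists [:: (1, x)]; split; last by rewrite big_seq1 mul1r.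
by move=> p; rewrite inE => /eqP ->.
Qed.

Lemma gen_ideal_min S J : is_ideal J -> sub_ideal S J -> sub_ideal (gen_ideal S) J.
Proof.
move=> hJ hS x [s [hs ->]]; apply: ideal_sum => // p ps.
by apply: idealMl => //; apply/hS/hs.
Qed.

Lemma scale_ideal_is_ideal c I : is_ideal I -> is_ideal (scale_ideal c I).
Proof.
move=> hI; split.
- by exists 0; split; [apply: ideal0 | rewrite mulr0].
- move=> _ _ [x [hx ->]] [y [hy ->]]; exists (x + y).
  by split; [apply: idealD | rewrite mulrDr].
- move=> a _ [x [hx ->]]; exists (a * x).
  by split; [apply: idealMl | rewrite mulrCA].
Qed.

Lemma mulr_preim_is_ideal c K : is_ideal K -> is_ideal (fun y => K (c * y)).
Proof.
move=> hK; split.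
- by rewrite mulr0; apply: ideal0.
- by move=> x y hx hy; rewrite mulrDr; apply: idealD.
- by move=> a x hx; rewrite mulrCA; apply: idealMl.
Qed.

Lemma mul_ideal_is_ideal I J : is_ideal (mul_ideal I J).
Proof. exact: gen_ideal_is_ideal. Qed.

Lemma mul_ideal_mul I J a b : I a -> J b -> mul_ideal I J (a * b).
Proof. by move=> ha hb; apply: gen_ideal_gen; exists a, b. Qed.

Lemma mul_ideal_min I J K : is_ideal K -> (forall a b, I a -> J b -> K (a * b)) ->
  sub_ideal (mul_ideal I J) K.
Proof. by move=> hK hIJ; apply: gen_ideal_min => // _ [a [b [ha hb ->]]]; apply: hIJ. Qed.

Lemma gen_ideal_mul_min S T K : is_ideal K -> (forall a b, S a -> T b -> K (a * b)) ->
  forall x y, gen_ideal S x -> gen_ideal T y -> K (x * y).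
Proof.
move=> hK hST x y hx hy; pose J x := forall y, gen_ideal T y -> K (x * y).
have hJ : is_ideal J.
  split.
  - by move=> z _; rewrite mul0r; apply: ideal0.
  - by move=> x1 x2 h1 h2 z hz; rewrite mulrDl; apply: idealD; [|apply: h1 | apply: h2].
  - by move=> a x1 h1 z hz; rewrite -mulrA; apply: idealMl; last apply: h1.
apply: (gen_ideal_min hJ) hx y hy => a ha.
by apply: gen_ideal_min (mulr_preim_is_ideal a hK) _ => b hb; apply: hST.
Qed.

Lemma mul_ideal_sub I I' J J' : sub_ideal I I' -> sub_ideal J J' ->
  sub_ideal (mul_ideal I J) (mul_ideal I' J').
Proof.
move=> hI hJ; apply: mul_ideal_min; first exact: mul_ideal_is_ideal.
by move=> a b ha hb; apply: mul_ideal_mul; [apply: hI | apply: hJ].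
Qed.

Lemma eq_mul_ideal I I' J J' : eq_ideal I I' -> eq_ideal J J' ->
  eq_ideal (mul_ideal I J) (mul_ideal I' J').
Proof.
move=> hI hJ x; split; apply: mul_ideal_sub => y.
- exact: (hI y).1.
- exact: (hJ y).1.
- exact: (hI y).2.
- exact: (hJ y).2.
Qed.

Lemma mul_idealACA_sub I J I' J' :
  sub_ideal (mul_ideal (mul_ideal I J) (mul_ideal I' J'))
            (mul_ideal (mul_ideal I I') (mul_ideal J J')).
Proof.
apply: mul_ideal_min; first exact: mul_ideal_is_ideal.
apply: gen_ideal_mul_min; first exact: mul_ideal_is_ideal.
move=> _ _ [a [b [ha hb ->]]] [a' [b' [ha' hb' ->]]].
by rewrite mulrACA; apply: mul_ideal_mul; apply: mul_ideal_mul.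
Qed.

Lemma mul_idealACA I J I' J' :
  eq_ideal (mul_ideal (mul_ideal I J) (mul_ideal I' J'))
           (mul_ideal (mul_ideal I I') (mul_ideal J J')).
Proof. by move=> x; split; apply: mul_idealACA_sub. Qed.

End IdealTheory.

Lemma det_congr_ideal (R : comPzRingType) (I : R -> Prop) r (A B : 'M[R]_r) :
  is_ideal I -> (forall i j, I (A i j - B i j)) -> I (\det A - \det B).
Proof.
move=> hI hAB; pose K x y := I (x - y).
have K_refl x : K x x by rewrite /K subrr; apply: ideal0.
have KD x1 x2 y1 y2 : K x1 x2 -> K y1 y2 -> K (x1 + y1) (x2 + y2).
  by move=> h1 h2; rewrite /K opprD addrACA; apply: idealD.
have KM x1 x2 y1 y2 : K x1 x2 -> K y1 y2 -> K (x1 * y1) (x2 * y2).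
  move=> h1 h2; rewrite /K (_ : _ - _ = x1 * (y1 - y2) + (x1 - x2) * y2).
    by apply: idealD => //; [apply: idealMl | apply: idealMr].
  by rewrite mulrBr mulrBl addrA subrK.
rewrite /determinant; apply: (big_ind2 K) => // s _; apply: (KM) => //.
by apply: (big_ind2 K) => // i _; apply: hAB.
Qed.

Lemma mul_ideal_lincomb (R : comPzRingType) (J N : R -> Prop) (s : seq R) x :
  is_ideal J -> sub_ideal N (gen_ideal (fun y => y \in s)) -> mul_ideal J N x ->
  exists w : 'I_(size s) -> R, (forall t, J (w t)) /\ x = \sum_t w t * s`_t.
Proof.
move=> hJ hNs; pose K x := exists w : 'I_(size s) -> R,
  (forall t, J (w t)) /\ x = \sum_t w t * s`_t.
have hK : is_ideal K.
  split.
  - exists (fun=> 0); split=> [t|]; first exact: ideal0.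
    by rewrite big1 // => t _; rewrite mul0r.
  - move=> _ _ [w1 [h1 ->]] [w2 [h2 ->]]; exists (fun t => w1 t + w2 t).
    split=> [t|]; first exact: idealD.
    by rewrite -big_split; apply: eq_bigr => t _; rewrite mulrDl.
  - move=> a _ [w [hw ->]]; exists (fun t => a * w t).
    split=> [t|]; first exact: idealMl.
    by rewrite mulr_sumr; apply: eq_bigr => t _; rewrite mulrA.
suff: sub_ideal (mul_ideal J N) K by apply.
apply: mul_ideal_min => // a b ha /hNs; move: b.
apply: (gen_ideal_min (mulr_preim_is_ideal a hK)) => b bs.
pose t0 : 'I_(size s) := Ordinal (etrans (index_mem b s) bs).
exists (fun t => (t == t0)%:R * a); split=> [t|]; first exact: idealMl.
rewrite (bigD1 t0) //= eqxx mul1r big1 ?addr0 ?nth_index // => t /negbTE ->.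
by rewrite !mul0r.
Qed.

Lemma ideal_lincomb (R : comPzRingType) (N : R -> Prop) (s : seq R) x :
  sub_ideal N (gen_ideal (fun y => y \in s)) -> N x ->
  exists w : 'I_(size s) -> R, x = \sum_t w t * s`_t.
Proof.
move=> hNs hx.
have hx1 : mul_ideal (fun=> True) N x by rewrite -[x]mul1r; apply: mul_ideal_mul.
by have [|w [_ ->]] := mul_ideal_lincomb _ hNs hx1; [split | exists w].
Qed.

Lemma det_kernel_eq0 (R : idomainType) r (M : 'M[R]_r) (v : 'cV[R]_r) u :
  M *m v = 0 -> v u 0 != 0 -> \det M = 0.
Proof.
move=> hMv hv; have := congr1 (fun A => (\adj M *m A) u 0) hMv.
rewrite /= mulmxA mul_adj_mx mul_scalar_mx mulmx0 !mxE => /eqP.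
by rewrite mulf_eq0 (negbTE hv) orbF => /eqP.
Qed.

Lemma horner_char_poly (F : fieldType) r (A : 'M[F]_r) z :
  (char_poly A).[z] = \det (z%:M - A).
Proof.
rewrite -horner_evalE -det_map_mx; congr (\det _).
rewrite raddfB /= map_scalar_mx; apply/matrixP => i j.
by rewrite !mxE /= !horner_evalE hornerX hornerC.
Qed.

(* y / c is an eigenvalue of the integral matrix W, hence integral over R. *)
Lemma eigenvector_dvd (R : idomainType) r (W : 'M[R]_r) (v : 'cV[R]_r) u (y c : R) :
  integrally_closed R -> c != 0 -> v u 0 != 0 -> c *: (W *m v) = y *: v ->
  exists a, y = a * c.
Proof.
move=> intcl c_neq0 v_neq0 hWv.
have det_eq0 : \det (y%:M - c *: W) = 0.
  apply: (det_kernel_eq0 _ v_neq0).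
  by rewrite mulmxBl mul_scalar_mx -scalemxAl hWv subrr.
have c'_neq0 : tofrac c != 0 by rewrite tofrac_eq0.
have [a ha] : exists a : R, tofrac y / tofrac c = FracField.tofrac a.
  apply: intcl; exists (char_poly W); split; first exact: char_poly_monic.
  rewrite /root map_char_poly horner_char_poly.
  have -> : (tofrac y / tofrac c)%:M - map_mx (@tofrac R) W =
      (tofrac c)^-1 *: map_mx (@tofrac R) (y%:M - c *: W).
    apply/matrixP => i j; rewrite !mxE rmorphB /= rmorphM /= rmorphMn /=.
    by rewrite mulrBr mulrA mulVf // mul1r mulrnAr [_^-1 * _]mulrC.
  by rewrite detZ det_map_mx det_eq0 rmorph0 mulr0.
by exists a; apply/eqP; rewrite -tofrac_eq tofracM -ha divfK.
Qed.

Lemma determinant_trick_mx (R : idomainType) (J : R -> Prop) r (W : 'M[R]_r) (v : 'cV[R]_r) u :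
  is_ideal J -> (forall i j, J (W i j)) -> W *m v = v -> v u 0 != 0 -> J 1.
Proof.
move=> hJ hW hWv v_neq0.
have det_eq0 : \det (1%:M - W) = 0.
  by apply: (det_kernel_eq0 _ v_neq0); rewrite mulmxBl mul1mx hWv subrr.
have := det_congr_ideal (A := 1%:M - W) (B := 1%:M) hJ.
rewrite det_eq0 det1 sub0r => /(_ _)/(idealN hJ); rewrite opprK; apply=> i j.
by rewrite !mxE addrAC subrr add0r; apply: idealN.
Qed.

Section FinitelyGeneratedIdeal.
Variables (R : idomainType) (N : R -> Prop) (s : seq R).
Hypotheses (hNs : eq_ideal N (gen_ideal (fun x => x \in s))) (hN0 : nonzero_ideal N).

Let v : 'cV[R]_(size s) := \col_u s`_u.

Let N_nth (u : 'I_(size s)) : N s`_u.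
Proof. by apply/(hNs _).2/gen_ideal_gen/mem_nth. Qed.

Let N_sub_gen : sub_ideal N (gen_ideal (fun x => x \in s)).
Proof. by move=> x /hNs. Qed.

Let col_neq0 : exists u, v u 0 != 0.
Proof.
case: hN0 => x [Nx x_neq0]; have [w xE] := ideal_lincomb N_sub_gen Nx.
case: (boolP [exists u, v u 0 != 0]) => [/existsP //|/existsPn v0].
case: x_neq0; rewrite xE big1 // => u _.
by move: (v0 u); rewrite negbK mxE => /eqP ->; rewrite mulr0.
Qed.

Let mul_col (W : 'I_(size s) -> 'I_(size s) -> R) u :
  ((\matrix_(i, j) W i j) *m v) u 0 = \sum_t W u t * s`_t.
Proof. by rewrite mxE; apply: eq_bigr => t _; rewrite !mxE. Qed.

Lemma mul_sub_scale_dvd (X : R -> Prop) (c y : R) :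
  integrally_closed R -> c != 0 -> sub_ideal (mul_ideal X N) (scale_ideal c N) ->
  X y -> exists a, y = a * c.
Proof.
move=> intcl c_neq0 hXN Xy.
have : forall u : 'I_(size s), exists w : 'I_(size s) -> R, y * s`_u = c * \sum_t w t * s`_t.
  move=> u; have [z [Nz ->]] := hXN _ (mul_ideal_mul Xy (N_nth u)).
  by have [w ->] := ideal_lincomb N_sub_gen Nz; exists w.
case/fin_all_exists => W hW.
have [u v_neq0] := col_neq0.
apply: (eigenvector_dvd (W := \matrix_(i, j) W i j) intcl c_neq0 v_neq0).
by apply/matrixP => i j; rewrite ord1 mxE mul_col -hW !mxE.
Qed.

Lemma determinant_trick (J : R -> Prop) :
  is_ideal J -> sub_ideal N (mul_ideal J N) -> J 1.
Proof.
move=> hJ hNJN.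
have : forall u : 'I_(size s), exists w : 'I_(size s) -> R,
    (forall t, J (w t)) /\ s`_u = \sum_t w t * s`_t.
  by move=> u; apply: mul_ideal_lincomb N_sub_gen (hNJN _ (N_nth u)).
case/fin_all_exists => W hW.
have [u v_neq0] := col_neq0.
apply: (determinant_trick_mx (W := \matrix_(i, j) W i j) hJ _ _ v_neq0).
  by move=> i j; rewrite mxE; apply: (hW i).1.
by apply/matrixP => i j; rewrite ord1 mul_col -(hW i).2 mxE.
Qed.

End FinitelyGeneratedIdeal.

Lemma cancel_mul_ideal (R : idomainType) (X N : R -> Prop) (c : R) :
  noetherian R -> integrally_closed R -> is_ideal X -> is_ideal N ->
  nonzero_ideal N -> c != 0 -> eq_ideal (mul_ideal X N) (scale_ideal c N) ->
  eq_ideal X (principal_ideal c).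
Proof.
move=> noeth intcl hX hN hN0 c_neq0 hXN.
have [s hNs] := noeth N hN.
have X_dvd y : X y -> exists a, y = a * c.
  exact: (mul_sub_scale_dvd hNs hN0 intcl c_neq0 (fun x => (hXN x).1)).
pose X' a := X (c * a).
have hX' : is_ideal X' := mulr_preim_is_ideal c hX.
have XN_sub : sub_ideal (mul_ideal X N) (scale_ideal c (mul_ideal X' N)).
  apply: mul_ideal_min; first exact/scale_ideal_is_ideal/mul_ideal_is_ideal.
  move=> _ b /[dup] /X_dvd [a ->] Xac Nb; exists (a * b); split; last by rewrite mulrCA mulrA.
  by apply: mul_ideal_mul => //; rewrite /X' mulrC.
have : X' 1.
  apply: (determinant_trick hNs hN0 hX') => m Nm.
  have cm_XN : mul_ideal X N (c * m) by apply/(hXN _).2; exists m.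
  by have [z [X'Nz /(mulfI c_neq0) ->]] := XN_sub _ cm_XN.
rewrite /X' mulr1 => Xc x; split; first exact: X_dvd.
by case=> a ->; apply: idealMl.
Qed.

Lemma lshift_perm_ext k q (f : 'I_k -> 'I_(k + q)) : injective f ->
  exists s : 'S_(k + q), forall a, s (lshift q a) = f a.
Proof.
move=> f_inj; pose A := [set f a | a in 'I_k].
have card_compl : #|~: A| = q.
  by apply/eqP; rewrite -(eqn_add2l k) -{1}(card_ord k) -(card_imset _ f_inj) cardsC card_ord.
pose g x := match split x with
  | inl a => f a
  | inr b => @enum_val _ (mem (~: A)) (cast_ord (esym card_compl) b) end.
have g_inj : injective g.
  move=> x y; rewrite -[x]splitK -[y]splitK /g.
  case: (split x) => a; case: (split y) => b; rewrite !unsplitK.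
  - by move/f_inj ->.
  - by move=> fa; have := enum_valP (cast_ord (esym card_compl) b); rewrite -fa inE imset_f.
  - by move=> fb; have := enum_valP (cast_ord (esym card_compl) a); rewrite fb inE imset_f.
  - by move/enum_val_inj/cast_ord_inj ->.
by exists (perm g_inj) => a; rewrite permE /g (unsplitK (inl _ a)).
Qed.

Section OrthogonalMinors.
Variable R : comPzRingType.

Lemma det_mxsub_ninj m k (f h : 'I_k -> 'I_m) (G : 'M[R]_m) :
  ~~ injectiveb f || ~~ injectiveb h -> \det (mxsub f h G) = 0.
Proof.
case/orP => /injectivePn [i1 [i2 i12 e]].
  by apply: (determinant_alternate i12) => j; rewrite !mxE e.
by rewrite -det_tr; apply: (determinant_alternate i12) => j; rewrite !mxE e.
Qed.

Lemma det_sqr_orthogonal n (G : 'M[R]_n) c : G *m G^T = c%:M -> \det G ^+ 2 = c ^+ n.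
Proof. by move/(congr1 determinant); rewrite det_mulmx det_tr det_scalar expr2. Qed.

(* Multiplying H by the block matrix [1, dl^T; 0, dr^T] makes it block triangular. *)
Lemma det_orthogonal_ulsubmx p q (H : 'M[R]_(p + q)) c : H *m H^T = c%:M ->
  \det H * \det (drsubmx H) = c ^+ q * \det (ulsubmx H).
Proof.
rewrite -{1 2}(submxK H) tr_block_mx mulmx_block (scalar_mx_block p q).
case/eq_block_mx => _ H_ur _ H_dr.
have := det_mulmx H (block_mx 1%:M (dlsubmx H)^T 0 (drsubmx H)^T).
rewrite -{1}(submxK H) mulmx_block !mulmx1 !mulmx0 !addr0 H_ur H_dr.
by rewrite det_lblock det_ublock det_scalar det1 mul1r det_tr mulrC => <-.
Qed.

Lemma minor_complement k q (G : 'M[R]_(k + q)) c (f h : 'I_k -> 'I_(k + q)) :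
  G *m G^T = c%:M ->
  exists y, det_ideal G q y /\ c ^+ q * \det (mxsub f h G) = \det G * y.
Proof.
move=> hG; case: (boolP (~~ injectiveb f || ~~ injectiveb h)) => [ninj|].
  exists 0; split; first exact: ideal0 (gen_ideal_is_ideal _).
  by rewrite det_mxsub_ninj // !mulr0.
rewrite negb_or !negbK => /andP [/injectiveP f_inj /injectiveP h_inj].
have [s sE] := lshift_perm_ext f_inj; have [s' s'E] := lshift_perm_ext h_inj.
pose H := mxsub s s' G.
have HH : H *m H^T = c%:M.
  apply/matrixP => i j; rewrite !mxE.
  have := congr1 (fun M : 'M[R]_(k + q) => M (s i) (s j)) hG.
  rewrite /= !mxE (inj_eq perm_inj) => <-.
  by rewrite [RHS](reindex_inj (@perm_inj _ s')); apply: eq_bigr => t _; rewrite !mxE.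
have := det_orthogonal_ulsubmx HH.
have -> : ulsubmx H = mxsub f h G by apply/matrixP => i j; rewrite !mxE sE s'E.
move=> <-; exists ((-1) ^+ s * (-1) ^+ (s'^-1)%g * \det (drsubmx H)); split.
  apply: idealMl; first exact: gen_ideal_is_ideal.
  apply: gen_ideal_gen.
  exists (fun i => s (rshift k i)), (fun i => s' (rshift k i)).
  by congr (\det _); apply/matrixP => i j; rewrite !mxE.
have -> : H = perm_mx s *m G *m perm_mx s'^-1.
  by rewrite -row_permE -col_permE; apply/matrixP => i j; rewrite !mxE.
by rewrite !det_mulmx !det_perm !mulrA [_ * \det G]mulrC.
Qed.

Variables (n : nat) (G : 'M[R]_n).

Lemma det_ideal0 : det_ideal G 0 1.
Proof.
by apply: gen_ideal_gen; exists (widen_ord (leq0n n)), (widen_ord (leq0n n)); rewrite det_mx00.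
Qed.

Lemma det_idealS k x : det_ideal G k.+1 x -> det_ideal G k x.
Proof.
move: x; apply: gen_ideal_min; first exact: gen_ideal_is_ideal.
move=> _ [f [h ->]]; rewrite (expand_det_row _ ord0).
apply: ideal_sum; first exact: gen_ideal_is_ideal.
move=> j _; apply: idealMl; first exact: gen_ideal_is_ideal.
apply: idealMl; first exact: gen_ideal_is_ideal.
apply: gen_ideal_gen; exists (f \o lift ord0), (h \o lift j).
by congr (\det _); apply/matrixP => a b; rewrite !mxE.
Qed.

Lemma det_ideal_det k : (k <= n)%N -> det_ideal G k (\det G).
Proof.
move/subKn <-; elim: (n - k)%N => [|j IH].
  rewrite subn0; apply: gen_ideal_gen; exists id, id.
  by congr (\det _); apply/matrixP => a b; rewrite !mxE.
by rewrite subnS; case: (n - j)%N IH => //= p; apply: det_idealS.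
Qed.

Variable c : R.
Hypothesis hG : G *m G^T = c%:M.

Lemma det_ideal_complement k x : (k <= n)%N -> det_ideal G k x ->
  exists y, det_ideal G (n - k) y /\ c ^+ (n - k) * x = \det G * y.
Proof.
move=> k_le_n; pose P x := exists y, det_ideal G (n - k) y /\ c ^+ (n - k) * x = \det G * y.
have hP : is_ideal P.
  split.
  - by exists 0; split; [exact: ideal0 (gen_ideal_is_ideal _) | rewrite !mulr0].
  - move=> x1 x2 [y1 [h1 e1]] [y2 [h2 e2]]; exists (y1 + y2).
    by split; [exact: idealD (gen_ideal_is_ideal _) h1 h2 | rewrite !mulrDr e1 e2].
  - move=> a z [y [hy e]]; exists (a * y).
    by split; [exact: idealMl (gen_ideal_is_ideal _) hy | rewrite mulrCA e mulrCA].
move: x; apply: gen_ideal_min hP _ => _ [f [h ->]].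
have [q nE] : exists q, n = (k + q)%N by exists (n - k)%N; rewrite subnKC.
by subst n; rewrite /P addKn; apply: minor_complement.
Qed.

Lemma det_ideal_complement_mul k k' x x' : (k <= n)%N -> (k' <= n)%N ->
  det_ideal G k x -> det_ideal G k' x' ->
  exists y y', [/\ det_ideal G (n - k) y, det_ideal G (n - k') y' &
                   c ^+ ((n - k) + (n - k')) * (x * x') = c ^+ n * (y * y')].
Proof.
move=> k_le_n k'_le_n hx hx'.
have [y [hy ey]] := det_ideal_complement k_le_n hx.
have [y' [hy' ey']] := det_ideal_complement k'_le_n hx'.
exists y, y'; split => //.
by rewrite exprD mulrACA ey ey' -(det_sqr_orthogonal hG) mulrACA expr2.
Qed.

End OrthogonalMinors.

Lemma det_ideal_mul_compl (R : idomainType) n (G : 'M[R]_n) c k k' :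
  G *m G^T = c%:M -> c != 0 -> (k + k')%N = n.+1 -> (0 < k)%N -> (0 < k')%N ->
  eq_ideal (mul_ideal (det_ideal G k) (det_ideal G k'))
           (scale_ideal c (mul_ideal (det_ideal G k.-1) (det_ideal G k'.-1))).
Proof.
move=> hG c_neq0 kk' k_gt0 k'_gt0.
have k_le_n : (k <= n)%N by lia.
have k'_le_n : (k' <= n)%N by lia.
move=> x; split.
  move: x; apply: mul_ideal_min => [|u u' hu hu'].
    exact/scale_ideal_is_ideal/mul_ideal_is_ideal.
  have [y [y' [hy hy' e]]] := det_ideal_complement_mul hG k_le_n k'_le_n hu hu'.
  rewrite (_ : n - k = k'.-1)%N in hy; last by lia.
  rewrite (_ : n - k' = k.-1)%N in hy'; last by lia.
  rewrite (_ : n - k + (n - k') = n.-1)%N in e; last by lia.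
  exists (y' * y); split; first exact: mul_ideal_mul.
  apply: (mulfI (expf_neq0 n.-1 c_neq0)).
  by rewrite e [RHS]mulrA -exprSr prednK ?[y' * y]mulrC //; lia.
case=> m [hm ->]; move: m hm.
apply: mul_ideal_min => [|w w' hw hw']; first exact/mulr_preim_is_ideal/mul_ideal_is_ideal.
have k1_le_n : (k.-1 <= n)%N by lia.
have k'1_le_n : (k'.-1 <= n)%N by lia.
have [y [y' [hy hy' e]]] := det_ideal_complement_mul hG k1_le_n k'1_le_n hw hw'.
rewrite (_ : n - k.-1 = k')%N in hy; last by lia.
rewrite (_ : n - k'.-1 = k)%N in hy'; last by lia.
rewrite (_ : n - k.-1 + (n - k'.-1) = n.+1)%N in e; last by lia.
rewrite (_ : c * (w * w') = y' * y); first exact: mul_ideal_mul.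
by apply: (mulfI (expf_neq0 n c_neq0)); rewrite mulrA -exprSr e [y' * y]mulrC.
Qed.

Lemma smith_ideals_mul (R : comPzRingType) n (G : 'M[R]_n) d k :
  smith_ideals G d -> \det G != 0 -> (0 < k <= n)%N ->
  eq_ideal (mul_ideal (d k) (det_ideal G k.-1)) (det_ideal G k).
Proof.
move=> [d1E dE] detG_neq0 k_range.
have [->|k_neq1] := eqVneq k 1%N.
  move=> x; split.
    move: x; apply: mul_ideal_min => [|a b /d1E D1a _]; first exact: gen_ideal_is_ideal.
    by apply: idealMr => //; apply: gen_ideal_is_ideal.
  by move/d1E => d1x; rewrite -[x]mulr1; apply: mul_ideal_mul => //; apply: det_ideal0.
have k_gt1 : (1 < k <= n)%N by lia.
have [D_neq0 _] := dE k k_gt1.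
apply: (D_neq0 _).2; exists (\det G); split; first by apply: det_ideal_det; lia.
exact/eqP.
Qed.

Theorem lemma2p6 (R : idomainType) (n : nat) (G : 'M[R]_n) (l : R)
  (d : nat -> R -> Prop) :
  dedekind R -> l != 0 -> G *m G^T = (l ^+ 2)%:M ->
  smith_ideals G d ->
  forall i : nat, (1 <= i)%N -> (i.*2 <= n)%N ->
    eq_ideal (mul_ideal (d i) (d (n - i + 1)%N)) (principal_ideal (l ^+ 2)).
Proof.
move=> [noeth intcl _] l_neq0 hG smithG i i_gt0; rewrite -addnn => two_i_le_n.
set c := l ^+ 2 in hG *; set j := (n - i + 1)%N.
have c_neq0 : c != 0 by rewrite expf_neq0.
have detG_neq0 : \det G != 0.
  apply/eqP => detG0; move: (expf_neq0 n c_neq0).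
  by rewrite -(det_sqr_orthogonal hG) detG0 expr0n eqxx.
have i_range : (0 < i <= n)%N by lia.
have j_range : (0 < j <= n)%N by lia.
pose D := det_ideal G.
apply: (cancel_mul_ideal (N := mul_ideal (D i.-1) (D j.-1))) => //.
- exact: mul_ideal_is_ideal.
- exact: mul_ideal_is_ideal.
- exists (\det G * \det G); split; last exact/eqP/mulf_neq0.
  by apply: mul_ideal_mul; apply: det_ideal_det; lia.
- move=> x; rewrite mul_idealACA.
  rewrite (eq_mul_ideal (smith_ideals_mul smithG detG_neq0 i_range)
                        (smith_ideals_mul smithG detG_neq0 j_range)).
  by apply: det_ideal_mul_compl => //; lia.
Qed.
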